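(* Let $\ell\geq 1$ be an integer and $m=2\ell+1$. Then for every $\epsilon\in\mathrm{GF}(3)^*=\{1,2\}$, the equation $$(x^{3^\ell}+\epsilon)(x^{3^\ell}-x)=1$$ has no solution $x\in\mathrm{GF}(3^m)^*$.
   Context: $\mathrm{GF}(q)$ denotes the finite field with $q$ elements and $\mathrm{GF}(q)^*=\mathrm{GF}(q)\setminus\{0\}$. *)

From HB Require Import structures.
From mathcomp Require Import all_boot all_order all_algebra all_field.

(** Write q = 3^l, so that #|F| = 3 q^2 and x |-> x^q is additive and fixes
    the prime field.  With z = x^q + eps the equation reads x^q - x = 1/z, so
    x = z - eps - 1/z; raising to the q-th power and using x^q = z - eps gives
    z = w - 1/w for w = z^q, and likewise w = u - 1/u for u = w^q, where
    u^3 = z^(3 q^2) = z.  Eliminating w between w u = u^2 - 1 and u^3 w = w^2 - 1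
    shows that t = u^2 is a root of the irreducible cubic t^3 + t^2 - 1 over
    GF(3), so u lies in GF(27) and w = u^(3^(l+1)) is one of u, u^3, u^9; each
    choice contradicts w u = u^2 - 1. *)
From HB Require Import structures.
From mathcomp Require Import all_boot all_order all_algebra all_field.
From mathcomp Require Import ring.
Import GRing.Theory.
Local Open Scope ring_scope.

Section PcharNatPower.

Variables (F : fieldType) (q : nat).
Hypothesis q_pchar : [pchar F].-nat q.

Lemma exprBn_pchar (x y : F) : (x - y) ^+ q = x ^+ q - y ^+ q.
Proof. by rewrite exprDn_pchar // exprNn_pchar. Qed.

Lemma natr_exp_pchar n : n%:R ^+ q = n%:R :> F.
Proof.
elim: n => [|n IHn]; first by rewrite expr0n eqn0Ngt (andP q_pchar).1.
by rewrite -addn1 natrD exprDn_pchar // IHn expr1n.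
Qed.

Lemma exp_pchar_subrV (z : F) : (z - z^-1) ^+ q = z ^+ q - (z ^+ q)^-1.
Proof. by rewrite exprBn_pchar exprVn. Qed.

End PcharNatPower.

Lemma pchar_nat_expn (F : fieldType) p k :
  p \in [pchar F] -> [pchar F].-nat (p ^ k)%N.
Proof.
move=> pcharFp; rewrite pnatX (eq_pnat _ (pcharf_eq pcharFp)).
by rewrite pnat_id ?(pcharf_prime pcharFp).
Qed.

Lemma expr_expn_fixed (R : pzSemiRingType) (a : R) (n : nat) :
  a ^+ n = a -> forall j, a ^+ (n ^ j)%N = a.
Proof. by move=> an_a; elim=> [|j IHj]; rewrite ?expr1 // expnSr exprM IHj. Qed.

Lemma expr_expn_mod (R : pzSemiRingType) (a : R) p n k :
  a ^+ (p ^ n)%N = a -> a ^+ (p ^ k)%N = a ^+ (p ^ (k %% n))%N.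
Proof.
move=> fixed_a; rewrite {1}(divn_eq k n) expnD [(_ * n)%N]mulnC expnM mulnC exprM.
by apply: expr_expn_fixed; rewrite -exprM mulnC exprM fixed_a.
Qed.

Section Char3.

Variable F : fieldType.
Hypothesis char3 : 3%:R = 0 :> F.

Lemma subrV_chain_cubic (u w : F) :
  u != 0 -> w = u - u^-1 -> u ^+ 3 = w - w^-1 ->
  (u ^+ 2) ^+ 3 + (u ^+ 2) ^+ 2 - 1 = 0.
Proof.
move=> u_neq0 w_def u3_def.
have w_neq0 : w != 0.
  have : u ^+ 3 != 0 by rewrite expf_neq0.
  by rewrite u3_def; apply: contraNneq => ->; rewrite invr0 subr0.
have Ew : u ^+ 2 - 1 - w * u = 0.
  by rewrite w_def mulrBl mulVf // subrr; ring.
have Eu : u ^+ 3 * w - (w ^+ 2 - 1) = 0.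
  by rewrite u3_def mulrBl mulVf // subrr; ring.
have -> : (u ^+ 2) ^+ 3 + (u ^+ 2) ^+ 2 - 1 =
    u ^+ 2 * (u ^+ 3 * w - (w ^+ 2 - 1)) +
    (u ^+ 2 - 1 - w * u) * (u ^+ 4 - (u ^+ 2 - 1) - w * u) +
    3%:R * (u ^+ 4 - u ^+ 2) by ring.
by rewrite Ew Eu char3; ring.
Qed.

Lemma cubic_root_exp27 (u : F) :
  (u ^+ 2) ^+ 3 + (u ^+ 2) ^+ 2 - 1 = 0 -> u ^+ (3 ^ 3) = u.
Proof.
set t := u ^+ 2 => cubic_t.
(* t^3 + t^2 - 1 divides t^13 - 1 over GF(3). *)
have t13 : t ^+ 13 - 1 = 0.
  have -> : t ^+ 13 - 1 = (t ^+ 3 + t ^+ 2 - 1) *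
      (4%:R - 3%:R * t + t ^+ 2 + t ^+ 3 - 2%:R * t ^+ 4 + 2%:R * t ^+ 5
       - t ^+ 6 + t ^+ 8 - t ^+ 9 + t ^+ 10) + 3%:R * (1 - t - t ^+ 2) by ring.
  by rewrite cubic_t char3; ring.
have -> : u ^+ (3 ^ 3) = u * (t ^+ 13 - 1) + u by rewrite /t; ring.
by rewrite t13 mulr0 add0r.
Qed.

Lemma cubic_root_frobenius_mulr_neq (u : F) k :
  (u ^+ 2) ^+ 3 + (u ^+ 2) ^+ 2 - 1 = 0 -> u ^+ (3 ^ k) * u != u ^+ 2 - 1.
Proof.
move=> cubic_t; rewrite (expr_expn_mod _ _ _ _ k (cubic_root_exp27 _ cubic_t)).
set t := u ^+ 2 in cubic_t *; rewrite -subr_eq0; apply/eqP => E.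
suff : (1 : F) = 0 by move/eqP; rewrite oner_eq0.
case: (k %% 3)%N (ltn_pmod k (isT : (0 < 3)%N)) E => [|[|[|//]]] _ E.
- by rewrite -E /t; ring.
- have -> : (1 : F) = (1 + 2%:R * t) * (t ^+ 3 + t ^+ 2 - 1) +
     (2%:R + t + t ^+ 2) * (u ^+ (3 ^ 1) * u - (t - 1))
     - 3%:R * (- t + t ^+ 2 + t ^+ 3 + t ^+ 4) by rewrite /t; ring.
  by rewrite cubic_t E char3; ring.
- have -> : (1 : F) = (t ^+ 2 + t ^+ 3 + t ^+ 4) * (t ^+ 3 + t ^+ 2 - 1) +
     (1 + t + 2%:R * t ^+ 2) * (u ^+ (3 ^ 2) * u - (t - 1))
     - 3%:R * (- t ^+ 3 + t ^+ 5 + t ^+ 6 + t ^+ 7) by rewrite /t; ring.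
  by rewrite cubic_t E char3; ring.
Qed.

End Char3.

Theorem lemma1 (l : nat) (F : finFieldType) (e : nat) :
  (1 <= l)%N ->
  #|F| = (3 ^ (2 * l + 1))%N ->
  (e = 1%N \/ e = 2%N) ->
  ~ exists x : F, x != 0 /\
      (x ^+ (3 ^ l) + e%:R) * (x ^+ (3 ^ l) - x) = 1.
Proof.
move=> _ cardF _ [x [_ eq_x]].
have pchar3 : 3 \in [pchar F] by apply: (card_finPcharP cardF).
set q := (3 ^ l)%N in eq_x; have q_pchar : [pchar F].-nat q.
  exact: pchar_nat_expn.
set z := x ^+ q + e%:R in eq_x; set w := z ^+ q; set u := w ^+ q.
have z_neq0 : z != 0.
  by apply: contra_eq_neq eq_x => ->; rewrite mul0r eq_sym oner_eq0.
have xq_x : x ^+ q - x = z^-1 by rewrite -[LHS](mulKf z_neq0) eq_x mulr1.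
have x_def : x = z - z^-1 - e%:R by rewrite -xq_x /z; ring.
have z_def : z = w - w^-1.
  have xq : x ^+ q = z - e%:R by rewrite addrK.
  have := congr1 (fun a => a ^+ q) x_def; rewrite /= xq.
  by rewrite exprBn_pchar // exp_pchar_subrV // natr_exp_pchar //; move/addIr.
have w_def : w = u - u^-1 by rewrite /u -exp_pchar_subrV // -z_def.
have u3 : u ^+ 3 = z.
  rewrite /u /w -!exprM -[RHS]expf_card cardF; congr (z ^+ _).
  by rewrite /q -expnSr -expnD addnS addn1 mul2n addnn.
have u_neq0 : u != 0 by rewrite expf_neq0 // expf_neq0.
have char3 := pcharf0 pchar3.
have cubic_u := subrV_chain_cubic _ char3 _ _ u_neq0 w_def (etrans u3 z_def).
have := cubic_root_frobenius_mulr_neq _ char3 _ l.+1 cubic_u.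
by rewrite expnS exprM u3 -/w w_def mulrBl mulVf // -expr2 eqxx.
Qed.
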